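(* Let $q$ be a prime power, let $n\ge 5$, let $a$ be the smallest prime divisor of $n$, let $d$ be an integer with $2\le d<n-(n/a)$, and let $\ell$ be a common prime divisor of $n$ and $d$. Then $$\binom{n/\ell}{d/\ell}_q\cdot\frac{|\mathrm{GL}(d/\ell,q^\ell)|}{|\mathrm{GL}(d,q)|}\cdot\frac{|\mathrm{GL}(n/\ell-d/\ell,q^\ell)|}{|\mathrm{GL}(n-d,q)|}\le q^{-(\ell-1)^2-3}.$$
   Context: $\binom{N}{K}_q=\prod_{i=0}^{K-1}\frac{q^{N-i}-1}{q^{K-i}-1}$ is the $q$-binomial coefficient, and $\mathrm{GL}(k,r)$ is the general linear group of $k\times k$ invertible matrices over $\mathbb{F}_r$. *)

From mathcomp Require Import all_boot all_order all_algebra.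
Set Implicit Arguments. Unset Strict Implicit. Unset Printing Implicit Defensive.
Import Order.TTheory GRing.Theory Num.Theory.
Local Open Scope ring_scope.

Definition qbinom (q N K : nat) : rat :=
  \prod_(i < K) (((q ^ (N - i))%N%:R - 1) / ((q ^ (K - i))%N%:R - 1)).

Definition GLorder (k r : nat) : nat := (\prod_(i < k) (r ^ k - r ^ i))%N.

From mathcomp Require Import all_boot all_order all_algebra.
From mathcomp Require Import zify ring lra.

Set Implicit Arguments.
Unset Strict Implicit.
Unset Printing Implicit Defensive.

Import Order.TTheory GRing.Theory Num.Theory.

(* Write k = d/l and j = (n-d)/l.  The crude estimates
     binom(k+j, k)_q <= q^(k(j+1)),  |GL(k, q^l)| <= q^(l k^2),  q^(N^2) <= q^N |GL(N, q)|
   bound the left-hand side by q^E with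
     E = k(j+1) + l(k^2 + j^2) + l(k + j) - l^2(k^2 + j^2),
   and E <= -((l-1)^2 + 3) for l >= 3 as soon as (k, j) <> (1, 1), and for l = 2 as soon as
   k < j and (k, j) <> (1, 2).  The hypothesis d < n - n/a excludes (k, j) = (1, 1) and, when
   l = 2 (so that a = 2), forces k < j.  In the remaining case l = 2, (k, j) = (1, 2), the
   left-hand side is exactly 1 / (q^5 (q-1)^3). *)

Lemma GLorder_le (k r : nat) : GLorder k r <= r ^ (k * k).
Proof.
rewrite expnM -(card_ord k) -prod_nat_const card_ord.
by apply: leq_prod => i _; rewrite leq_subr.
Qed.

Lemma GLorder_ge (k r : nat) : 1 < r -> r ^ (k * k) <= r ^ k * GLorder k r.
Proof.
move=> r_gt1.
have -> : r ^ k * GLorder k r = \prod_(i < k) (r * (r ^ k - r ^ i)).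
  by rewrite big_split prod_nat_const card_ord.
rewrite expnM -(card_ord k) -prod_nat_const card_ord; apply: leq_prod => i _.
have : r ^ i.+1 <= r ^ k by rewrite leq_pexp2l // ltnW.
rewrite expnS; nia.
Qed.

Lemma exponent_gap_ge3 (l k j : nat) : 3 <= l -> 5 <= k * k + j * j ->
  k * j + k + l * (k + j) + l * (k * k + j * j) + l * l + 4
    <= l * l * (k * k + j * j) + 2 * l.
Proof.
move=> l_ge3 S_ge5.
have small_terms : 2 * (k * j + k + l * (k + j)) <= (2 * l + 3) * (k * k + j * j).
  have kj_le_S : 2 * (k * j) <= k * k + j * j.
    by have [] := nat_AGM2 k j; rewrite sqrnD; lia.
  have sq_ge (x : nat) : x <= x * x by case: x => // x; rewrite mulSn leq_addr.
  have sum_le_S : k + j <= k * k + j * j by rewrite leq_add.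
  have := leq_mul (leqnn l) sum_le_S.
  nia.
move: small_terms S_ge5; set X := _ + l * (k + j); set S := k * k + j * j.
clearbody X S => small_terms S_ge5.
rewrite -(leq_pmul2l (isT : 0 < 2)).
have [B [def_B B_ge3]] : exists B, 2 * (l * l) = 4 * l + 3 + B /\ 3 <= B.
  by exists (2 * (l * l) - (4 * l + 3)); nia.
have := leq_mul S_ge5 (leqnn B).
nia.
Qed.

Lemma exponent_gap_2 (k j : nat) : 0 < k < j -> 3 < k + j ->
  k * j + k + 2 * (k + j) + 2 * (k * k + j * j) + 2 * 2 + 4
    <= 2 * 2 * (k * k + j * j) + 2 * 2.
Proof.
case/andP=> k_gt0 lt_kj kj_gt3.
have [->|k_ge2] : k = 1 \/ 1 < k by lia.
  have j_ge3 : 3 <= j by lia.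
  nia.
have : k * j + 4 * j <= 2 * (j * j) by nia.
nia.
Qed.

Lemma exponent_gap (l k j : nat) : 1 < l -> 0 < k -> 0 < j -> 2 < k + j ->
  (l = 2 -> k < j /\ 3 < k + j) ->
  k * (j + 1) + (l * (k * k) + k * l) + (l * (j * j) + j * l) + ((l - 1) ^ 2 + 3)
    <= k * l * (k * l) + j * l * (j * l).
Proof.
move=> l_gt1 k_gt0 j_gt0 kj_gt2 l2_cond.
have e_sq : (l - 1) ^ 2 + 2 * l = l * l + 1 by case: l l_gt1 {l2_cond} => // l _; nia.
suff : k * j + k + l * (k + j) + l * (k * k + j * j) + l * l + 4
         <= l * l * (k * k + j * j) + 2 * l by nia.
have [l2 | l_ge3] : l = 2 \/ 3 <= l by lia.
  by rewrite l2; case: (l2_cond l2) => lt_kj kj_gt3; apply: exponent_gap_2; lia.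
apply: exponent_gap_ge3 => //; clear l2_cond.
have [k_gt1 | j_gt1] : 1 < k \/ 1 < j by lia.
all: nia.
Qed.

Lemma double_lt_of_lt_codim (n d : nat) :
  2 %| n -> d < n - n %/ pdiv n -> 2 * d < n.
Proof.
case: n => [|n] even_n lt_d; first by rewrite div0n in lt_d.
have pdiv_le2 := pdiv_min_dvd (isT : 1 < 2) even_n.
have pdiv2 : pdiv n.+1 = 2.
  by apply/eqP; rewrite eqn_leq pdiv_le2 prime_gt1 // pdiv_prime // (dvdn_leq _ even_n).
move: lt_d; rewrite pdiv2; case/dvdnP: even_n => m ->; rewrite mulnK //; lia.
Qed.

Lemma dims_of_lt_codim (l k j : nat) : prime l -> 0 < k ->
  k * l < (k + j) * l - (k + j) * l %/ pdiv ((k + j) * l) ->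
  [/\ 0 < j, 2 < k + j & (l = 2 -> k < j)].
Proof.
move=> l_prime k_gt0 lt_codim.
have l_gt0 := prime_gt0 l_prime.
have lt_kl : k * l < (k + j) * l by apply: leq_trans lt_codim (leq_subr _ _).
have j_gt0 : 0 < j by move: lt_kl; rewrite ltn_pmul2r // -{1}[k]addn0 ltn_add2l.
have even_of_l2 : l = 2 -> 2 * k < k + j.
  move=> l2; move: lt_codim; rewrite l2 => /(double_lt_of_lt_codim (dvdn_mull _ (dvdnn 2))).
  by rewrite mulnA ltn_pmul2r.
split=> //; last by move=> /even_of_l2; lia.
case: (ltnP 2 (k + j)) => // le_kj2.
have [k1 j1] : k = 1 /\ j = 1 by lia.
move: lt_codim; rewrite k1 j1 => /(double_lt_of_lt_codim (dvdn_mulr _ (dvdnn 2))).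
by rewrite mul1n ltnn.
Qed.

Local Open Scope ring_scope.

Lemma ler_expr_div (R : realFieldType) (r : R) (a c e : nat) :
  1 <= r -> (a + e <= c)%N -> r ^+ a / r ^+ c <= r ^- e.
Proof.
move=> r_ge1 le_ace.
have r_gt0 : 0 < r by apply: lt_le_trans r_ge1.
have r_unit : r \is a GRing.unit by rewrite unitfE gt_eqF.
have le_ac : (a <= c)%N by apply: leq_trans le_ace; apply: leq_addr.
rewrite -invf_div -exprB // lef_pV2 ?posrE ?exprn_gt0 //.
by apply: ler_weXn2l => //; rewrite leq_subRL.
Qed.

Lemma ratio_sub1_le (R : realFieldType) (x y : R) :
  2 <= x -> 1 <= y -> 0 <= (y * x - 1) / (x - 1) <= 2 * y.
Proof.
move=> x_ge2 y_ge1; have x1_gt0 : 0 < x - 1 by lra.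
rewrite divr_ge0 ?ler_pdivrMr //=; [nra | nra | lra].
Qed.

Lemma qbinom_ge0_le (q m k : nat) : (1 < q)%N -> (k <= m)%N ->
  0 <= qbinom q m k <= (q ^ (k * (m - k + 1)))%N%:R.
Proof.
move=> q_gt1 le_km.
have q_ge2 : (2 : rat) <= q%:R by rewrite (ler_nat rat 2).
have factor_bound (i : 'I_k) :
    (0 : rat) <= ((q ^ (m - i))%N%:R - 1) / ((q ^ (k - i))%N%:R - 1)
              <= ((q ^ (m - k + 1))%N%:R : rat).
  have lt_ik := ltn_ord i.
  have -> : (q ^ (m - i) = q ^ (m - k) * q ^ (k - i))%N by rewrite -expnD; congr expn; lia.
  have x_ge2 : (2 : rat) <= (q ^ (k - i))%N%:R.
    rewrite (ler_nat rat 2) (leq_trans q_gt1) // -{1}(expn1 q).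
    by rewrite leq_pexp2l ?subn_gt0 // ltnW.
  have y_ge1 : (1 : rat) <= (q ^ (m - k))%N%:R by rewrite (ler_nat rat 1) expn_gt0 ltnW.
  rewrite !natrM; case/andP: (ratio_sub1_le x_ge2 y_ge1) => -> le2 /=.
  apply: le_trans le2 _.
  by rewrite addn1 expnSr natrM mulrC; apply: ler_wpM2l; lra.
rewrite /qbinom mulnC expnM natrX -[k in _ ^+ k](card_ord k) -prodr_const.
by rewrite prodr_ge0 ?ler_prod // => i _; case/andP: (factor_bound i).
Qed.

Lemma GLorder_ratio_le (q l k : nat) : (1 < q)%N ->
  (GLorder k (q ^ l))%:R / (GLorder (k * l) q)%:R
    <= (q%:R : rat) ^+ (l * (k * k) + k * l) / q%:R ^+ (k * l * (k * l)).
Proof.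
move=> q_gt1; set N := (k * l)%N.
have le_num := GLorder_le k (q ^ l); rewrite -expnM in le_num.
have ge_den := GLorder_ge N q_gt1.
have den_gt0 : (0 < GLorder N q)%N.
  by rewrite lt0n; apply: contraTneq ge_den => ->; rewrite muln0 -ltnNge expn_gt0 ltnW.
have q_gt0 : (0 : rat) < q%:R by rewrite ltr0n ltnW.
rewrite ler_pdivlMr ?exprn_gt0 // mulrAC ler_pdivrMr ?ltr0n //.
by rewrite -!natrX -!natrM ler_nat expnD -mulnA leq_mul.
Qed.

Lemma qbinom_GLorder_ratio_le (q l k j : nat) : (1 < q)%N ->
  qbinom q (k + j) k
    * ((GLorder k (q ^ l))%:R / (GLorder (k * l) q)%:R)
    * ((GLorder j (q ^ l))%:R / (GLorder (j * l) q)%:R)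
  <= (q%:R : rat) ^+ (k * (j + 1) + (l * (k * k) + k * l) + (l * (j * j) + j * l))
       / q%:R ^+ (k * l * (k * l) + j * l * (j * l)).
Proof.
move=> q_gt1.
have /andP [qbinom_ge0 qbinom_le] := qbinom_ge0_le q_gt1 (leq_addr j k).
rewrite addKn in qbinom_le.
have ratio_ge0 (a b : nat) : 0 <= (a%:R / b%:R : rat) by rewrite divr_ge0.
set x : rat := q%:R.
have -> : x ^+ (k * (j + 1) + (l * (k * k) + k * l) + (l * (j * j) + j * l))
            / x ^+ (k * l * (k * l) + j * l * (j * l))
          = x ^+ (k * (j + 1))
            * (x ^+ (l * (k * k) + k * l) / x ^+ (k * l * (k * l)))
            * (x ^+ (l * (j * j) + j * l) / x ^+ (j * l * (j * l))).
  by rewrite !exprD invfM; ring.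
rewrite natrX in qbinom_le.
apply: ler_pM; rewrite ?(mulr_ge0 qbinom_ge0) ?ratio_ge0 ?GLorder_ratio_le //.
by apply: ler_pM; rewrite ?ratio_ge0 ?GLorder_ratio_le.
Qed.

Lemma GLorder_natr (R : numDomainType) (k r : nat) : (0 < r)%N ->
  (GLorder k r)%:R = \prod_(i < k) (r%:R ^+ k - r%:R ^+ i) :> R.
Proof.
move=> r_gt0; rewrite natr_prod; apply: eq_bigr => i _.
by rewrite natrB ?natrX // leq_pexp2l // ltnW.
Qed.

Lemma qbinom_GLorder_ratio_2_1_2 (q : nat) : (1 < q)%N ->
  qbinom q 3 1
    * ((GLorder 1 (q ^ 2))%:R / (GLorder 2 q)%:R)
    * ((GLorder 2 (q ^ 2))%:R / (GLorder 4 q)%:R)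
  <= (q%:R : rat) ^- 4.
Proof.
move=> q_gt1.
rewrite /qbinom !GLorder_natr ?expn_gt0 ?(ltnW q_gt1) //.
rewrite !big_ord_recr !big_ord0 /= !natrX.
have : (2 : rat) <= q%:R by rewrite (ler_nat rat 2).
move: (q%:R : rat) => x x_ge2.
have xpow_neq (a b : nat) : (b < a)%N -> x ^+ a - x ^+ b != 0.
  by move=> lt_ba; rewrite subr_eq0 gt_eqF // ltr_eXn2l //; lra.
rewrite [X in X <= _](_ : _ = (x ^+ 5 * (x - 1) ^+ 3)^-1); last first.
  field; rewrite (xpow_neq 1 0) ?(xpow_neq 4 3) ?(xpow_neq 4 2) ?(xpow_neq 4 1) //.
  by rewrite (xpow_neq 4 0) ?(xpow_neq 2 1) ?(xpow_neq 2 0) //= andbT gt_eqF //; lra.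
have [x_gt0 x1_gt0] : 0 < x /\ 0 < x - 1 by split; lra.
rewrite subn0 expr1 lef_pV2 ?posrE ?mulr_gt0 ?exprn_gt0 //.
have : 1 <= (x - 1) ^+ 3 by rewrite exprn_ege1 //; lra.
have : x ^+ 4 <= x ^+ 5 by rewrite ler_eXn2l //; lra.
nra.
Qed.

Theorem lemma5p3 (q p e n d l : nat) :
  prime p -> (0 < e)%N -> q = (p ^ e)%N ->
  (5 <= n)%N ->
  (2 <= d)%N -> (d < n - n %/ pdiv n)%N ->
  prime l -> (l %| n)%N -> (l %| d)%N ->
  qbinom q (n %/ l) (d %/ l)
    * ((GLorder (d %/ l) (q ^ l))%:R / (GLorder d q)%:R)
    * ((GLorder (n %/ l - d %/ l) (q ^ l))%:R / (GLorder (n - d) q)%:R)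
  <= (q%:R : rat) ^- ((l - 1) ^ 2 + 3)%N.
Proof.
move=> p_prime e_gt0 -> _ d_ge2 lt_codim l_prime /dvdnP [m def_n] /dvdnP [k def_d].
subst n d.
have q_gt1 : (1 < p ^ e)%N by rewrite -(expn0 p) ltn_exp2l ?prime_gt1.
have l_gt0 := prime_gt0 l_prime.
have k_gt0 : (0 < k)%N by move: d_ge2; case: (posnP k) => // ->.
have [j def_m] : exists j, m = (k + j)%N.
  exists (m - k)%N; rewrite subnKC // -(leq_pmul2r l_gt0).
  exact: leq_trans (ltnW lt_codim) (leq_subr _ _).
subst m; rewrite !mulnK // addKn -mulnBl addKn.
have [j_gt0 kj_gt2 lt_kj_of_l2] := dims_of_lt_codim l_prime k_gt0 lt_codim.
case: (boolP [&& l == 2, k == 1 & j == 2]) => [/and3P [/eqP-> /eqP-> /eqP->] | generic].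
  exact: qbinom_GLorder_ratio_2_1_2.
apply: le_trans (qbinom_GLorder_ratio_le l k j q_gt1) _.
apply: ler_expr_div; first by rewrite (ler_nat rat 1) ltnW.
apply: exponent_gap => //; first exact: prime_gt1.
by move=> l2; have lt_kj := lt_kj_of_l2 l2; split=> //; move: generic; rewrite l2; lia.
Qed.
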